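(* Let $f_1,f_2:[0,1]\to[0,1]$ be continuous functions such that $f_1(0)=f_2(0)=0$ and $f_1(1)=f_2(1)=1$. If $f_1\in\mathcal U$, then there exist continuous functions $g_1,g_2:[0,1]\to[0,1]$ such that $g_1(0)=g_2(0)=0$, $g_1(1)=g_2(1)=1$, and $f_1\circ g_1=f_2\circ g_2$.
   Context: A function $f:[0,1]\to\mathbb{R}$ is called piecewise monotone if there is a partition of $[0,1]$ into finitely many subintervals on each of which $f$ is strictly increasing or strictly decreasing. $\mathcal U$ denotes the set of piecewise monotone continuous functions $f:[0,1]\to[0,1]$ with the property that, for every $c\in[0,1]$, the set $f^{-1}(c)$ does not contain both a local maximum point and a local minimum point of $f$. *)

(* concrete reals R. Functions [0,1] -> R are modelled as
   f : R -> R of which only the values on [0,1] matter. *)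
From Stdlib Require Import Reals.
Open Scope R_scope.

Definition in01 (x : R) : Prop := 0 <= x <= 1.

Definition cont01 (f : R -> R) : Prop :=
  forall x, in01 x -> forall eps, 0 < eps ->
    exists delta, 0 < delta /\
      forall y, in01 y -> Rabs (y - x) < delta -> Rabs (f y - f x) < eps.

Definition maps01 (f : R -> R) : Prop := forall x, in01 x -> in01 (f x).

Definition strict_incr_on (f : R -> R) (a b : R) : Prop :=
  forall x y, a <= x -> x < y -> y <= b -> f x < f y.
Definition strict_decr_on (f : R -> R) (a b : R) : Prop :=
  forall x y, a <= x -> x < y -> y <= b -> f y < f x.

Definition piecewise_monotone (f : R -> R) : Prop :=
  exists (n : nat) (t : nat -> R),
    (0 < n)%nat /\ t 0%nat = 0 /\ t n = 1 /\
    (forall i, (i < n)%nat -> t i < t (S i)) /\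
    (forall i, (i < n)%nat ->
       strict_incr_on f (t i) (t (S i)) \/ strict_decr_on f (t i) (t (S i))).

Definition local_max_point (f : R -> R) (x : R) : Prop :=
  in01 x /\ exists delta, 0 < delta /\
    forall y, in01 y -> Rabs (y - x) < delta -> f y <= f x.
Definition local_min_point (f : R -> R) (x : R) : Prop :=
  in01 x /\ exists delta, 0 < delta /\
    forall y, in01 y -> Rabs (y - x) < delta -> f x <= f y.

Definition classU (f : R -> R) : Prop :=
  piecewise_monotone f /\ cont01 f /\ maps01 f /\
  forall c : R, ~ (exists x y,
      f x = c /\ f y = c /\ local_max_point f x /\ local_min_point f y).

(* Call f climbable if for every
   continuous h : [0,1] -> [0,1] with h 0 = 0 and h 1 = 1 some path in
   {(s,u) | f s = h u} joins (0,0) to (1,1); such a path is a pair (g1, g2) for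
   h = f2. Increasing functions are climbable, and f is climbable as soon as it
   factors as f' o w with f' and w climbable. A Z-shaped w (up, down, up) is
   climbable: in each round of climbing its three branches back and forth, the
   parameter of h advances by an amount given by uniform continuity of h.
   Finally, if no two adjacent monotone pieces of f can be merged, they alternate,
   and the interior piece of least oscillation is the middle of a zigzag whose
   values stay between those at its ends; replacing that zigzag by its chord
   factors f as f' o w with w Z-shaped and f' having two pieces fewer. *)

From Stdlib Require Import Reals Lra Lia ClassicalEpsilon Classical FunctionalExtensionality.
Open Scope R_scope.

Ltac solve_abs :=
  unfold Rmin, Rmax in *; repeat destruct Rle_dec; unfold Rabs in *;
  repeat destruct Rcase_abs; try lra.

Lemma cont01_lipschitz g K : 0 < K ->
  (forall x y, in01 x -> in01 y -> Rabs (g y - g x) <= K * Rabs (y - x)) -> cont01 g.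
Proof.
  intros HK L x Hx e He. exists (e / K). split.
  - apply Rdiv_lt_0_compat; auto.
  - intros y Hy Hyx. eapply Rle_lt_trans; [apply L; auto|].
    apply Rmult_lt_compat_l with (r := K) in Hyx; auto.
    replace (K * (e / K)) with e in Hyx by (field; lra). exact Hyx.
Qed.

Lemma cont01_id : cont01 (fun x => x).
Proof. apply (cont01_lipschitz _ 1); [lra|]. intros; lra. Qed.

Lemma cont01_const c : cont01 (fun _ => c).
Proof. intros x Hx e He. exists 1; split; [lra|]. intros. solve_abs. Qed.

Lemma cont01_comp g p : cont01 g -> cont01 p -> maps01 p -> cont01 (fun x => g (p x)).
Proof.
  intros Cg Cp Mp x Hx e He.
  destruct (Cg (p x) (Mp x Hx) e He) as [d1 [Hd1 P1]].
  destruct (Cp x Hx d1 Hd1) as [d2 [Hd2 P2]].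
  exists d2; split; auto.
Qed.

Lemma cont01_opp f : cont01 f -> cont01 (fun x => - f x).
Proof.
  intros C x Hx e He. destruct (C x Hx e He) as [d [Hd P]].
  exists d; split; auto. intros y Hy Hyx. specialize (P y Hy Hyx). solve_abs.
Qed.

Lemma cont01_affine f c A k : cont01 f -> cont01 (fun s => c + (f s - A) * k).
Proof.
  intros C x Hx e He.
  assert (Hk : 0 <= Rabs k) by apply Rabs_pos.
  destruct (C x Hx (e / (Rabs k + 1))) as [d [Hd P]].
  { apply Rdiv_lt_0_compat; lra. }
  exists d; split; auto. intros y Hy Hyx. specialize (P y Hy Hyx).
  replace (c + (f y - A) * k - (c + (f x - A) * k)) with ((f y - f x) * k) by ring.
  rewrite Rabs_mult. pose proof (Rabs_pos (f y - f x)).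
  apply Rlt_le_trans with (e / (Rabs k + 1) * (Rabs k + 1)).
  - apply Rle_lt_trans with (Rabs (f y - f x) * (Rabs k + 1)).
    + apply Rmult_le_compat_l; lra.
    + apply Rmult_lt_compat_r; lra.
  - right. field. lra.
Qed.

Lemma cont01_reverse c : cont01 c -> cont01 (fun x => c (1 - x)).
Proof.
  intros C. apply cont01_comp; auto.
  - apply (cont01_lipschitz _ 1); [lra|]. intros. solve_abs.
  - intros x Hx; unfold in01 in *; lra.
Qed.

Lemma cont01_piecewise f g h m : in01 m ->
  (forall x, in01 x -> x <= m -> f x = g x) ->
  (forall x, in01 x -> m <= x -> f x = h x) ->
  cont01 g -> cont01 h -> cont01 f.
Proof.
  intros Hm Eg Eh Cg Ch x Hx e He.
  assert (e2 : 0 < e / 2) by lra.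
  destruct (Cg x Hx _ e2) as [d1 [Hd1 P1]].
  destruct (Ch x Hx _ e2) as [d2 [Hd2 P2]].
  destruct (Cg m Hm _ e2) as [d3 [Hd3 P3]].
  destruct (Ch m Hm _ e2) as [d4 [Hd4 P4]].
  assert (Egh : g m = h m) by (rewrite <- Eg, <- Eh; auto; lra).
  exists (Rmin (Rmin d1 d2) (Rmin d3 d4)). split.
  { repeat apply Rmin_pos; auto. }
  intros y Hy Hyx. unfold in01 in *.
  destruct (Rle_dec x m), (Rle_dec y m).
  - rewrite !Eg by (unfold in01; lra).
    assert (Hy1 : Rabs (y - x) < d1) by solve_abs. specialize (P1 y Hy Hy1). solve_abs.
  - rewrite (Eh y), (Eg x) by (unfold in01; lra).
    assert (Hy4 : Rabs (y - m) < d4) by solve_abs. assert (Hx3 : Rabs (x - m) < d3) by solve_abs.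
    specialize (P4 y Hy Hy4). specialize (P3 x Hx Hx3). solve_abs.
  - rewrite (Eg y), (Eh x) by (unfold in01; lra).
    assert (Hy3 : Rabs (y - m) < d3) by solve_abs. assert (Hx4 : Rabs (x - m) < d4) by solve_abs.
    specialize (P3 y Hy Hy3). specialize (P4 x Hx Hx4). solve_abs.
  - rewrite !Eh by (unfold in01; lra).
    assert (Hy2 : Rabs (y - x) < d2) by solve_abs. specialize (P2 y Hy Hy2). solve_abs.
Qed.

Lemma cont01_uniform h : cont01 h -> forall e, 0 < e -> exists d, 0 < d /\
  forall u v, in01 u -> in01 v -> Rabs (u - v) < d -> Rabs (h u - h v) < e.
Proof.
  intros Ch e He.
  set (clamp := fun y => Rmax 0 (Rmin y 1)).
  assert (Hclamp : forall y, in01 y -> clamp y = y) by (intros y [? ?]; unfold clamp; solve_abs).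
  assert (Cp : forall x, 0 <= x <= 1 -> continuity_pt (fun y => h (clamp y)) x).
  { intros x Hx eps Heps. simpl. unfold R_dist.
    destruct (Ch x Hx eps Heps) as [d [Hd P]]. exists d. split; auto.
    intros y [_ Hy]. rewrite (Hclamp x Hx).
    apply P; unfold in01, clamp; solve_abs. }
  destruct (Heine _ _ (compact_P3 0 1) Cp (mkposreal e He)) as [d P].
  exists d. split; [apply cond_pos|]. intros u v Hu Hv Huv.
  specialize (P u v Hu Hv Huv). simpl in P. rewrite !Hclamp in P by auto. exact P.
Qed.

Lemma first_hit_up h s e c : cont01 h -> 0 <= s <= e -> e <= 1 -> h s <= c <= h e ->
  exists t, s <= t <= e /\ h t = c /\ forall u, s <= u < t -> h u < c.
Proof.
  intros Ch Hse He [Hsc Hce].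
  destruct (Req_dec (h s) c) as [Eq|Neq].
  { exists s; split; [lra|split; auto]. intros; lra. }
  set (E := fun u => s <= u <= e /\ forall v, s <= v <= u -> h v < c).
  assert (Es : E s) by (split; [lra|]; intros v Hv; replace v with s by lra; lra).
  destruct (completeness E) as [t [Ub Lub]].
  { exists e. intros u [Hu _]. lra. }
  { exists s. exact Es. }
  assert (Hst : s <= t) by (apply Ub, Es).
  assert (Hte : t <= e) by (apply Lub; intros u [Hu _]; lra).
  assert (Below : forall u, s <= u < t -> h u < c).
  { intros u Hu. destruct (classic (exists u', E u' /\ u < u')) as [[u' [[_ Hu'] Hlt]]|NE].
    - apply Hu'. lra.
    - exfalso. assert (t <= u); [|lra]. apply Lub. intros x Ex.
      destruct (Rle_dec x u); auto. exfalso. apply NE. exists x. split; auto. lra. }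
  exists t. split; [lra|]. split; [|exact Below].
  assert (Ht01 : in01 t) by (unfold in01; lra).
  destruct (Rtotal_order (h t) c) as [Lt|[Eq|Gt]]; auto; exfalso.
  -     assert (Hte' : t < e) by (destruct (Req_dec t e); [subst; lra|lra]).
    destruct (Ch t Ht01 (c - h t)) as [d [Hd P]]; [lra|].
    set (u' := Rmin (t + d/2) e).
    assert (Eu' : E u').
    { split; [unfold u'; solve_abs|]. intros v Hv.
      destruct (Rlt_dec v t); [apply Below; lra|].
      assert (Hvt : Rabs (v - t) < d) by (unfold u' in Hv; solve_abs).
      specialize (P v ltac:(unfold in01; unfold u' in Hv; solve_abs) Hvt). solve_abs. }
    specialize (Ub u' Eu'). unfold u' in Ub. solve_abs.
  - assert (Hst' : s < t) by (destruct (Req_dec s t); [subst; lra|lra]).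
    destruct (Ch t Ht01 (h t - c)) as [d [Hd P]]; [lra|].
    set (v := Rmax s (t - d/2)).
    assert (Hvt : Rabs (v - t) < d) by (unfold v; solve_abs).
    specialize (P v ltac:(unfold in01, v; solve_abs) Hvt).
    assert (h v < c) by (apply Below; unfold v; solve_abs). solve_abs.
Qed.

Lemma first_hit_down h s e c : cont01 h -> 0 <= s <= e -> e <= 1 -> h e <= c <= h s ->
  exists t, s <= t <= e /\ h t = c /\ forall u, s <= u < t -> c < h u.
Proof.
  intros Ch Hse He Hc.
  destruct (first_hit_up (fun x => - h x) s e (- c)) as [t [Ht [Eq P]]];
    auto using cont01_opp; [lra|].
  exists t. split; [exact Ht|]. split; [lra|]. intros u Hu. specialize (P u Hu). lra.
Qed.

Lemma last_hit_up h s e c : cont01 h -> 0 <= s <= e -> e <= 1 -> h s <= c <= h e ->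
  exists t, s <= t <= e /\ h t = c /\ forall u, t < u <= e -> c < h u.
Proof.
  intros Ch Hse He Hc.
  destruct (first_hit_down (fun x => h (1 - x)) (1 - e) (1 - s) c) as [t [Ht [Eq P]]];
    auto using cont01_reverse; try lra.
  { replace (1 - (1 - s)) with s by ring. replace (1 - (1 - e)) with e by ring. lra. }
  exists (1 - t). split; [lra|]. split; [exact Eq|]. intros u Hu.
  replace u with (1 - (1 - u)) by ring. apply P. lra.
Qed.

Lemma last_hit_down h s e c : cont01 h -> 0 <= s <= e -> e <= 1 -> h e <= c <= h s ->
  exists t, s <= t <= e /\ h t = c /\ forall u, t < u <= e -> h u < c.
Proof.
  intros Ch Hse He Hc.
  destruct (last_hit_up (fun x => - h x) s e (- c)) as [t [Ht [Eq P]]];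
    auto using cont01_opp; [lra|].
  exists t. split; [exact Ht|]. split; [lra|]. intros u Hu. specialize (P u Hu). lra.
Qed.

Lemma cont01_IVT h s e c : cont01 h -> 0 <= s <= e -> e <= 1 ->
  (h s <= c <= h e \/ h e <= c <= h s) -> exists t, s <= t <= e /\ h t = c.
Proof.
  intros Ch Hse He [Hc|Hc].
  - destruct (first_hit_up h s e c) as [t [? [? _]]]; eauto.
  - destruct (first_hit_down h s e c) as [t [? [? _]]]; eauto.
Qed.

Lemma strict_incr_on_opp f a b : strict_decr_on f a b -> strict_incr_on (fun s => - f s) a b.
Proof. intros D x y Hx Hxy Hy. specialize (D x y Hx Hxy Hy). lra. Qed.

Lemma strict_decr_on_opp f a b : strict_incr_on f a b -> strict_decr_on (fun s => - f s) a b.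
Proof. intros I x y Hx Hxy Hy. specialize (I x y Hx Hxy Hy). lra. Qed.

Lemma strict_incr_on_sub f a b a' b' :
  strict_incr_on f a b -> a <= a' -> b' <= b -> strict_incr_on f a' b'.
Proof. intros I H1 H2 x y Hx Hxy Hy. apply I; lra. Qed.

Lemma strict_decr_on_sub f a b a' b' :
  strict_decr_on f a b -> a <= a' -> b' <= b -> strict_decr_on f a' b'.
Proof. intros D H1 H2 x y Hx Hxy Hy. apply D; lra. Qed.

Lemma strict_incr_on_ext f g a b :
  strict_incr_on f a b -> (forall s, a <= s <= b -> g s = f s) -> strict_incr_on g a b.
Proof. intros I E x y Hx Hxy Hy. rewrite !E by lra. apply I; lra. Qed.

Lemma strict_decr_on_ext f g a b :
  strict_decr_on f a b -> (forall s, a <= s <= b -> g s = f s) -> strict_decr_on g a b.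
Proof. intros D E x y Hx Hxy Hy. rewrite !E by lra. apply D; lra. Qed.

Lemma strict_incr_on_concat f a b c :
  strict_incr_on f a b -> strict_incr_on f b c -> strict_incr_on f a c.
Proof.
  intros I1 I2 x y Hx Hxy Hy. destruct (Rle_dec y b); [apply I1; lra|].
  destruct (Rle_dec b x); [apply I2; lra|].
  assert (f x < f b) by (apply I1; lra). assert (f b < f y) by (apply I2; lra). lra.
Qed.

Lemma strict_decr_on_concat f a b c :
  strict_decr_on f a b -> strict_decr_on f b c -> strict_decr_on f a c.
Proof.
  intros D1 D2 x y Hx Hxy Hy. destruct (Rle_dec y b); [apply D1; lra|].
  destruct (Rle_dec b x); [apply D2; lra|].
  assert (f b < f x) by (apply D1; lra). assert (f y < f b) by (apply D2; lra). lra.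
Qed.

Lemma strict_incr_on_le f a b x y :
  strict_incr_on f a b -> a <= x -> x <= y -> y <= b -> f x <= f y.
Proof. intros I Hx Hxy Hy. destruct (Req_dec x y); [subst; lra|]. left; apply I; lra. Qed.

Lemma strict_decr_on_le f a b x y :
  strict_decr_on f a b -> a <= x -> x <= y -> y <= b -> f y <= f x.
Proof. intros D Hx Hxy Hy. destruct (Req_dec x y); [subst; lra|]. left; apply D; lra. Qed.

Lemma strict_incr_on_inj f a b x y :
  strict_incr_on f a b -> a <= x <= b -> a <= y <= b -> f x = f y -> x = y.
Proof.
  intros I Hx Hy E. destruct (Rtotal_order x y) as [L|[Q|G]]; auto.
  - assert (f x < f y) by (apply I; lra). lra.
  - assert (f y < f x) by (apply I; lra). lra.
Qed.

(* Continuity of the inverse of f at f s. *)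
Lemma strict_incr_on_modulus f a b s e : strict_incr_on f a b -> a <= s <= b -> 0 < e ->
  exists g, 0 < g /\
    forall s', a <= s' <= b -> Rabs (f s' - f s) < g -> Rabs (s' - s) < e.
Proof.
  intros I Hs He.
  assert (Up : exists g1, 0 < g1 /\
            forall s', s <= s' <= b -> f s' - f s < g1 -> s' - s < e).
  { destruct (Rle_dec (s + e/2) b).
    - exists (f (s + e/2) - f s). split; [assert (f s < f (s + e/2)) by (apply I; lra); lra|].
      intros s' Hs' Hlt. destruct (Rlt_dec (s' - s) e); auto. exfalso.
      assert (f (s + e/2) < f s') by (apply I; lra). lra.
    - exists 1. split; [lra|]. intros. lra. }
  assert (Down : exists g2, 0 < g2 /\
            forall s', a <= s' <= s -> f s - f s' < g2 -> s - s' < e).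
  { destruct (Rle_dec a (s - e/2)).
    - exists (f s - f (s - e/2)). split; [assert (f (s - e/2) < f s) by (apply I; lra); lra|].
      intros s' Hs' Hlt. destruct (Rlt_dec (s - s') e); auto. exfalso.
      assert (f s' < f (s - e/2)) by (apply I; lra). lra.
    - exists 1. split; [lra|]. intros. lra. }
  destruct Up as [g1 [Hg1 P1]], Down as [g2 [Hg2 P2]].
  exists (Rmin g1 g2). split; [apply Rmin_pos; auto|].
  intros s' Hs' Hlt. destruct (Rle_dec s s').
  - assert (f s <= f s') by (apply (strict_incr_on_le f a b s s' I); lra).
    assert (s' - s < e) by (apply P1; [lra|solve_abs]). solve_abs.
  - assert (f s' <= f s) by (apply (strict_incr_on_le f a b s' s I); lra).
    assert (s - s' < e) by (apply P2; [lra|solve_abs]). solve_abs.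
Qed.

Definition coincidence_path (F H : R -> R) (s u s' u' : R) : Prop :=
  exists c d : R -> R,
    cont01 c /\ maps01 c /\ cont01 d /\ maps01 d /\
    c 0 = s /\ d 0 = u /\ c 1 = s' /\ d 1 = u' /\
    forall x, in01 x -> F (c x) = H (d x).

Lemma coincidence_path_intro F H s u s' u' c d :
  cont01 c -> maps01 c -> cont01 d -> maps01 d ->
  c 0 = s -> d 0 = u -> c 1 = s' -> d 1 = u' ->
  (forall x, in01 x -> F (c x) = H (d x)) -> coincidence_path F H s u s' u'.
Proof. intros. exists c, d. tauto. Qed.

Lemma coincidence_path_refl F H s u :
  in01 s -> in01 u -> F s = H u -> coincidence_path F H s u s u.
Proof.
  intros Hs Hu E.
  apply (coincidence_path_intro F H s u s u (fun _ => s) (fun _ => u));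
    auto using cont01_const; intros x _; auto.
Qed.

Definition concat (c1 c2 : R -> R) (x : R) : R :=
  if Rle_dec x (1/2) then c1 (2 * x) else c2 (2 * x - 1).

Lemma cont01_concat c1 c2 :
  cont01 c1 -> cont01 c2 -> c1 1 = c2 0 -> cont01 (concat c1 c2).
Proof.
  intros C1 C2 E.
  assert (Double : forall b, cont01 (fun x => Rmax 0 (Rmin (2 * x - b) 1))).
  { intro b. apply (cont01_lipschitz _ 2); [lra|]. intros. solve_abs. }
  assert (In01 : forall b x, in01 (Rmax 0 (Rmin (2 * x - b) 1))).
  { intros b x. unfold in01. solve_abs. }
  apply (cont01_piecewise _ (fun x => c1 (Rmax 0 (Rmin (2 * x - 0) 1)))
                             (fun x => c2 (Rmax 0 (Rmin (2 * x - 1) 1))) (1/2)).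
  - unfold in01; lra.
  - intros x Hx Hm. unfold concat, in01 in *. destruct Rle_dec; [|lra]. f_equal. solve_abs.
  - intros x Hx Hm. unfold concat, in01 in *. destruct Rle_dec.
    + replace x with (1/2) by lra. replace (2 * (1/2)) with 1 by field.
      rewrite E. f_equal. solve_abs.
    + f_equal. solve_abs.
  - apply cont01_comp; auto. intros x _. apply In01.
  - apply cont01_comp; auto. intros x _. apply In01.
Qed.

Lemma maps01_concat c1 c2 : maps01 c1 -> maps01 c2 -> maps01 (concat c1 c2).
Proof.
  intros M1 M2 x Hx. unfold concat, in01 in *. destruct Rle_dec.
  - apply M1; unfold in01; lra.
  - apply M2; unfold in01; lra.
Qed.

Lemma concat_0 c1 c2 : concat c1 c2 0 = c1 0.
Proof. unfold concat. destruct Rle_dec; [f_equal; ring|lra]. Qed.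

Lemma concat_1 c1 c2 : concat c1 c2 1 = c2 1.
Proof. unfold concat. destruct Rle_dec; [lra|f_equal; ring]. Qed.

Lemma coincidence_path_trans F H s1 u1 s2 u2 s3 u3 :
  coincidence_path F H s1 u1 s2 u2 -> coincidence_path F H s2 u2 s3 u3 ->
  coincidence_path F H s1 u1 s3 u3.
Proof.
  intros (c & d & Cc & Mc & Cd & Md & c0 & d0 & c1 & d1 & E)
         (c' & d' & Cc' & Mc' & Cd' & Md' & c0' & d0' & c1' & d1' & E').
  apply (coincidence_path_intro F H s1 u1 s3 u3 (concat c c') (concat d d'));
    rewrite ?concat_0, ?concat_1; auto using maps01_concat;
    try (apply cont01_concat; auto; congruence).
  intros x Hx. unfold concat, in01 in *. destruct Rle_dec.
  - apply E; unfold in01; lra.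
  - apply E'; unfold in01; lra.
Qed.

Lemma coincidence_path_opp F H s u s' u' :
  coincidence_path (fun s => - F s) (fun u => - H u) s u s' u' ->
  coincidence_path F H s u s' u'.
Proof.
  intros (c & d & Cc & Mc & Cd & Md & c0 & d0 & c1 & d1 & E).
  apply (coincidence_path_intro F H s u s' u' c d); auto.
  intros x Hx. specialize (E x Hx). lra.
Qed.

Definition segment (u v x : R) : R := u + x * (v - u).

Lemma segment_between u v x : in01 x ->
  (u <= segment u v x <= v) \/ (v <= segment u v x <= u).
Proof.
  intros [Hx0 Hx1]. unfold segment. destruct (Rle_dec u v); [left|right]; split; nra.
Qed.

Lemma cont01_segment u v : cont01 (segment u v).
Proof.
  apply (cont01_lipschitz _ (Rabs (v - u) + 1)); [pose proof (Rabs_pos (v - u)); lra|].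
  intros x y _ _. unfold segment.
  replace (u + y * (v - u) - (u + x * (v - u))) with ((y - x) * (v - u)) by ring.
  rewrite Rabs_mult, Rmult_comm. apply Rmult_le_compat_r; [apply Rabs_pos|lra].
Qed.

Lemma maps01_segment u v : in01 u -> in01 v -> maps01 (segment u v).
Proof. intros Hu Hv x Hx. destruct (segment_between u v x Hx); unfold in01 in *; lra. Qed.

Lemma cont01_section F a b : 0 <= a <= b -> b <= 1 -> cont01 F ->
  exists G : R -> R, forall v, F a <= v <= F b -> a <= G v <= b /\ F (G v) = v.
Proof.
  intros Hab Hb CF.
  exists (fun v => epsilon (inhabits 0) (fun s => a <= s <= b /\ F s = v)).
  intros v Hv. apply epsilon_spec. apply cont01_IVT; auto; lra.
Qed.

(* Over an increasing piece of F, a run of H staying within the range of that piece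
   is matched by moving along the piece: s = F^-1 (H u). *)
Lemma coincidence_path_incr F H a b s u s' u' :
  0 <= a <= b -> b <= 1 -> cont01 F -> strict_incr_on F a b -> cont01 H ->
  in01 u -> in01 u' ->
  (forall v, (u <= v <= u' \/ u' <= v <= u) -> F a <= H v <= F b) ->
  a <= s <= b -> a <= s' <= b -> F s = H u -> F s' = H u' ->
  coincidence_path F H s u s' u'.
Proof.
  intros Hab Hb CF IF CH Hu Hu' Rg Hs Hs' E E'.
  destruct (cont01_section F a b Hab Hb CF) as [G HG].
  set (d := segment u u').
  assert (Md : maps01 d) by (apply maps01_segment; auto).
  assert (Spec : forall x, in01 x -> a <= G (H (d x)) <= b /\ F (G (H (d x))) = H (d x)).
  { intros x Hx. apply HG, Rg, segment_between, Hx. }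
  apply (coincidence_path_intro F H s u s' u' (fun x => G (H (d x))) d); auto.
  - intros x Hx e He. destruct (Spec x Hx) as [Hc Hfc].
    destruct (strict_incr_on_modulus F a b _ e IF Hc He) as [g [Hg Pg]].
    destruct (cont01_comp H d CH (cont01_segment u u') Md x Hx g Hg) as [del [Hdel Pdel]].
    exists del. split; auto. intros y Hy Hyx. destruct (Spec y Hy) as [Hcy Hfcy].
    apply Pg; auto. rewrite Hfc, Hfcy. apply Pdel; auto.
  - intros x Hx. destruct (Spec x Hx). unfold in01; lra.
  - apply cont01_segment.
  - assert (H0 : in01 0) by (unfold in01; lra). destruct (Spec 0 H0) as [Hc Hfc].
    unfold d, segment in *. rewrite Rmult_0_l, Rplus_0_r in *.
    apply (strict_incr_on_inj F a b); auto. congruence.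
  - unfold d, segment; ring.
  - assert (H1 : in01 1) by (unfold in01; lra). destruct (Spec 1 H1) as [Hc Hfc].
    unfold d, segment in *. replace (u + 1 * (u' - u)) with u' in * by ring.
    apply (strict_incr_on_inj F a b); auto. congruence.
  - unfold d, segment; ring.
  - intros x Hx. apply Spec, Hx.
Qed.

Lemma coincidence_path_decr F H a b s u s' u' :
  0 <= a <= b -> b <= 1 -> cont01 F -> strict_decr_on F a b -> cont01 H ->
  in01 u -> in01 u' ->
  (forall v, (u <= v <= u' \/ u' <= v <= u) -> F b <= H v <= F a) ->
  a <= s <= b -> a <= s' <= b -> F s = H u -> F s' = H u' ->
  coincidence_path F H s u s' u'.
Proof.
  intros Hab Hb CF DF CH Hu Hu' Rg Hs Hs' E E'.
  apply coincidence_path_opp, (coincidence_path_incr _ _ a b);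
    auto using cont01_opp, strict_incr_on_opp; try lra.
  intros v Hv. specialize (Rg v Hv). lra.
Qed.

Definition admissible (f : R -> R) : Prop := cont01 f /\ maps01 f /\ f 0 = 0 /\ f 1 = 1.

Definition climbable (f : R -> R) : Prop :=
  forall h, admissible h -> coincidence_path f h 0 0 1 1.

Lemma climbable_incr f : admissible f -> strict_incr_on f 0 1 -> climbable f.
Proof.
  intros (Cf & Mf & f0 & f1) I h (Ch & Mh & h0 & h1).
  apply (coincidence_path_incr f h 0 1); auto; try (unfold in01; lra).
  intros v Hv. rewrite f0, f1. apply Mh. unfold in01; lra.
Qed.

Lemma climbable_factor f f' w : climbable f' -> admissible w -> climbable w ->
  (forall s, in01 s -> f' (w s) = f s) -> climbable f.
Proof.
  intros Cf' Aw Cw E h Ah.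
  destruct (Cf' h Ah) as (a & b & Ca & Ma & Cb & Mb & a0 & b0 & a1 & b1 & Eab).
  destruct (Cw a (conj Ca (conj Ma (conj a0 a1))))
    as (c & d & Cc & Mc & Cd & Md & c0 & d0 & c1 & d1 & Ecd).
  apply (coincidence_path_intro f h 0 0 1 1 c (fun x => b (d x)));
    auto using cont01_comp; try congruence.
  - intros x Hx. apply Mb, Md, Hx.
  - intros x Hx. rewrite <- E, Ecd by auto. apply Eab, Md, Hx.
Qed.

Section Zshape.

Variables F h : R -> R.
Variables a b : R.
Hypotheses (AF : admissible F) (Ah : admissible h) (Ha : 0 <= a) (Hab : a < b) (Hb : b <= 1).
Hypotheses (I1 : strict_incr_on F 0 a) (D2 : strict_decr_on F a b) (I3 : strict_incr_on F b 1).

Lemma zshape_peak_valley : 0 <= F b < F a /\ F a <= 1.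
Proof.
  destruct AF as (_ & MF & _).
  assert (F b < F a) by (apply D2; lra).
  destruct (MF a), (MF b); unfold in01; lra.
Qed.

(* Climb the first rising branch until h reaches the peak F a (time t), go back
   down the falling branch while h is rewound to its last visit of the valley
   F b before t, then climb the last rising branch up to time t again. *)
Lemma zshape_cross_up s u : 0 <= s <= a -> in01 u -> h u <= F b -> F s = h u ->
  exists q t, b <= q <= 1 /\ u <= t <= 1 /\ h t = F a /\ F q = F a /\
    coincidence_path F h s u q t.
Proof.
  intros Hs Hu Hhu Es. destruct AF as (CF & MF & F0 & F1), Ah as (Ch & Mh & h0 & h1).
  destruct zshape_peak_valley as [Hvp Hp1].
  assert (Mh' : forall v, 0 <= v <= 1 -> 0 <= h v <= 1) by (intros; apply Mh; auto).
  destruct Hu as [Hu0 Hu1].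
  destruct (first_hit_up h u 1 (F a)) as [t [Ht [ht Bt]]]; auto; try lra.
  destruct (last_hit_up h u t (F b)) as [v [Hv [hv Bv]]]; auto; try lra.
  destruct (cont01_IVT F b 1 (F a)) as [q [Hq Fq]]; auto; try lra.
  exists q, t. do 4 (split; [lra|]).
  assert (Below : forall w, u <= w <= t -> h w <= F a).
  { intros w Hw. destruct (Req_dec w t); [subst; lra|]. left; apply Bt; lra. }
  assert (Above : forall w, v <= w <= t -> F b <= h w).
  { intros w Hw. destruct (Req_dec w v); [subst; lra|]. left; apply Bv; lra. }
  apply (coincidence_path_trans F h s u a t);
    [|apply (coincidence_path_trans F h a t b v)].
  - apply (coincidence_path_incr F h 0 a); auto; try (unfold in01; lra).
    intros w Hw. rewrite F0. split; [apply Mh'|apply Below]; lra.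
  - apply (coincidence_path_decr F h a b); auto; try (unfold in01; lra).
    intros w Hw. split; [apply Above|apply Below]; lra.
  - apply (coincidence_path_incr F h b 1); auto; try (unfold in01; lra).
    intros w Hw. rewrite F1. split; [apply Above|apply Mh']; lra.
Qed.

(* Symmetrically, from the peak: climb the last branch until h next visits the
   valley (time r), go back up the falling branch while h is rewound to its last
   visit of the peak before r, and descend the first branch to time r. *)
Lemma zshape_cross_down q t : b <= q <= 1 -> in01 t -> h t = F a -> F q = F a ->
  coincidence_path F h q t 1 1 \/
  exists p r, 0 <= p <= a /\ t <= r <= 1 /\ h r = F b /\ F p = F b /\
    coincidence_path F h q t p r.
Proof.
  intros Hq Ht ht Fq. destruct AF as (CF & MF & F0 & F1), Ah as (Ch & Mh & h0 & h1).
  destruct zshape_peak_valley as [Hvp Hp1].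
  assert (Mh' : forall v, 0 <= v <= 1 -> 0 <= h v <= 1) by (intros; apply Mh; auto).
  destruct Ht as [Ht0 Ht1].
  destruct (classic (exists w, t <= w <= 1 /\ h w <= F b)) as [[w [Hw hw]]|NE].
  2: { left. apply (coincidence_path_incr F h b 1); auto; try (unfold in01; lra).
       intros v Hv. rewrite F1. split; [|apply Mh'; lra].
       destruct (Rle_dec (h v) (F b)); [|lra]. exfalso. apply NE. exists v. split; [lra|auto]. }
  right.
  destruct (first_hit_down h t w (F b)) as [r [Hr [hr Br]]]; auto; try lra.
  destruct (last_hit_down h t r (F a)) as [l [Hl [hl Bl]]]; auto; try lra.
  destruct (cont01_IVT F 0 a (F b)) as [p [Hp Fp]]; auto; try lra.
  exists p, r. do 4 (split; [lra|]).
  assert (Above : forall v, t <= v <= r -> F b <= h v).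
  { intros v Hv. destruct (Req_dec v r); [subst; lra|]. left; apply Br; lra. }
  assert (Below : forall v, l <= v <= r -> h v <= F a).
  { intros v Hv. destruct (Req_dec v l); [subst; lra|]. left; apply Bl; lra. }
  apply (coincidence_path_trans F h q t b r);
    [|apply (coincidence_path_trans F h b r a l)].
  - apply (coincidence_path_incr F h b 1); auto; try (unfold in01; lra).
    intros v Hv. rewrite F1. split; [apply Above|apply Mh']; lra.
  - apply (coincidence_path_decr F h a b); auto; try (unfold in01; lra).
    intros v Hv. split; [apply Above|apply Below]; lra.
  - apply (coincidence_path_incr F h 0 a); auto; try (unfold in01; lra).
    intros v Hv. rewrite F0. split; [apply Mh'|apply Below]; lra.
Qed.

Definition zshape_reached (u : R) : Prop :=
  in01 u /\ h u <= F b /\ exists s, 0 <= s <= a /\ F s = h u /\ coincidence_path F h 0 0 s u.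

Variable eta : R.
Hypothesis Heta : forall u v, in01 u -> in01 v -> Rabs (u - v) < eta ->
  Rabs (h u - h v) < F a - F b.

(* Between the peak time t and the valley time r, h drops by F a - F b, so r - t >= eta. *)
Lemma zshape_round u : zshape_reached u ->
  coincidence_path F h 0 0 1 1 \/ exists r, u + eta <= r /\ zshape_reached r.
Proof.
  intros (Hu & Hhu & s & Hs & Es & Ps).
  destruct (zshape_cross_up s u) as (q & t & Hq & Ht & ht & Fq & Pq); auto.
  assert (Pt := coincidence_path_trans _ _ _ _ _ _ _ _ Ps Pq).
  destruct (zshape_cross_down q t) as [Pend|(p & r & Hp & Hr & hr & Fp & Pr)];
    auto; try (unfold in01 in *; lra).
  { left. eapply coincidence_path_trans; eauto. }
  right. exists r. split.
  - destruct (Rle_dec eta (r - t)); [lra|]. exfalso.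
    assert (Hrt : Rabs (r - t) < eta) by solve_abs.
    specialize (Heta r t ltac:(unfold in01 in *; lra) ltac:(unfold in01 in *; lra) Hrt).
    rewrite hr, ht in Heta. solve_abs.
  - split; [unfold in01 in *; lra|]. split; [lra|].
    exists p. split; [lra|]. split; [congruence|]. eapply coincidence_path_trans; eauto.
Qed.

Lemma zshape_iterate n : forall u, zshape_reached u -> 1 - u < INR n * eta ->
  coincidence_path F h 0 0 1 1.
Proof.
  induction n as [|n IH]; intros u Hu Hn; [simpl in Hn; destruct Hu as [[_ ?] _]; lra|].
  rewrite S_INR in Hn.
  destruct (zshape_round u Hu) as [Done|[r [Hr Hreach]]]; auto.
  apply (IH r Hreach). lra.
Qed.

End Zshape.

Lemma climbable_zshape F a b : admissible F -> 0 <= a -> a < b -> b <= 1 ->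
  strict_incr_on F 0 a -> strict_decr_on F a b -> strict_incr_on F b 1 -> climbable F.
Proof.
  intros AF Ha Hab Hb I1 D2 I3 h Ah.
  destruct (zshape_peak_valley F a b AF Ha Hab Hb D2) as [Hvp _].
  pose proof AF as (_ & _ & F0 & _). pose proof Ah as (Ch & _ & h0 & _).
  destruct (cont01_uniform h Ch (F a - F b)) as [eta [Heta Pu]]; [lra|].
  destruct (archimed_cor1 eta Heta) as [N [HN HN0]].
  apply (zshape_iterate F h a b AF Ah Ha Hab Hb I1 D2 I3 eta Pu N 0).
  - split; [unfold in01; lra|]. split; [lra|].
    exists 0. split; [lra|]. split; [congruence|].
    apply coincidence_path_refl; unfold in01; lra.
  - assert (0 < INR N) by (apply lt_0_INR; auto).
    apply Rmult_lt_compat_l with (r := INR N) in HN; auto.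
    rewrite Rinv_r in HN; lra.
Qed.

Definition splice (l r : R) (g k : R -> R) (s : R) : R :=
  if Rle_dec l s then if Rle_dec s r then k s else g s else g s.

Lemma splice_in l r g k s : l <= s <= r -> splice l r g k s = k s.
Proof. intros Hs. unfold splice. destruct Rle_dec; [|lra]. destruct Rle_dec; [auto|lra]. Qed.

Lemma splice_out l r g k s : l <= r -> k l = g l -> k r = g r ->
  s <= l \/ r <= s -> splice l r g k s = g s.
Proof.
  intros HLR EL ER Hs. unfold splice.
  destruct Rle_dec; auto. destruct Rle_dec; auto.
  destruct (Req_dec s l); [subst; auto|]. replace s with r by lra. auto.
Qed.

Lemma cont01_splice l r g k : 0 <= l <= r -> r <= 1 -> k l = g l -> k r = g r ->
  cont01 g -> cont01 k -> cont01 (splice l r g k).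
Proof.
  intros HL HR EL ER Cg Ck.
  apply (cont01_piecewise _ g (fun s => if Rle_dec s r then k s else g s) l).
  - unfold in01; lra.
  - intros s _ Hs. apply splice_out; auto; lra.
  - intros s _ Hs. unfold splice. destruct Rle_dec; [auto|].
    destruct Rle_dec; [|auto]. replace s with l by lra. auto.
  - exact Cg.
  - apply (cont01_piecewise _ k g r); auto; [unfold in01; lra| |].
    + intros s _ Hs. destruct Rle_dec; [auto|lra].
    + intros s _ Hs. destruct Rle_dec; [|auto]. replace s with r by lra. auto.
Qed.

Lemma strict_incr_on_affine f a b c A k : strict_incr_on f a b -> 0 < k ->
  strict_incr_on (fun s => c + (f s - A) * k) a b.
Proof. intros I Hk x y Hx Hxy Hy. specialize (I x y Hx Hxy Hy). nra. Qed.

Lemma strict_decr_on_affine f a b c A k : strict_decr_on f a b -> 0 < k ->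
  strict_decr_on (fun s => c + (f s - A) * k) a b.
Proof. intros D Hk x y Hx Hxy Hy. specialize (D x y Hx Hxy Hy). nra. Qed.

(* [straighten f l r] replaces the graph of f over [l,r] by its chord, and
   [chord_param f l r s] is the point of [l,r] where the chord takes the value f s;
   thus f = straighten f l r o chord_param f l r when f([l,r]) lies between f l and f r. *)
Definition straighten (f : R -> R) (l r : R) : R -> R :=
  splice l r f (fun s => f l + (s - l) * ((f r - f l) / (r - l))).

Definition chord_param (f : R -> R) (l r : R) : R -> R :=
  splice l r (fun s => s) (fun s => l + (f s - f l) * ((r - l) / (f r - f l))).

Lemma straighten_out f l r s : l < r -> s <= l \/ r <= s -> straighten f l r s = f s.
Proof. intros HLR Hs. apply splice_out; auto; [lra|ring|field; lra]. Qed.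

Lemma chord_param_out f l r s : f l <> f r -> l <= r -> s <= l \/ r <= s ->
  chord_param f l r s = s.
Proof.
  intros Hf HLR Hs. apply splice_out; auto; [ring|].
  field. intro E. apply Hf. lra.
Qed.

Lemma chord_param_opp f l r : f l <> f r ->
  chord_param (fun s => - f s) l r = chord_param f l r.
Proof.
  intros Hf. apply functional_extensionality. intro s. unfold chord_param, splice.
  destruct Rle_dec; [destruct Rle_dec|]; auto. field. split; intro E; apply Hf; lra.
Qed.

Lemma admissible_straighten f l r : admissible f -> 0 <= l < r -> r <= 1 ->
  admissible (straighten f l r).
Proof.
  intros (Cf & Mf & f0 & f1) HL HR.
  assert (HfL : in01 (f l)) by (apply Mf; unfold in01; lra).
  assert (HfR : in01 (f r)) by (apply Mf; unfold in01; lra).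
  split; [|split; [|split]].
  - apply cont01_splice; auto; [lra|ring|field; lra|].
    apply (cont01_affine (fun s => s)), cont01_id.
  - intros s Hs. destruct (Rle_dec l s); [destruct (Rle_dec s r)|].
    + unfold straighten. rewrite splice_in by lra. unfold in01 in *.
      assert (0 <= (s - l) / (r - l) <= 1).
      { split; [unfold Rdiv; apply Rmult_le_pos; [lra|left; apply Rinv_0_lt_compat; lra]|].
        apply (Rmult_le_reg_r (r - l)); [lra|]. field_simplify; lra. }
      replace ((s - l) * ((f r - f l) / (r - l))) with ((s - l) / (r - l) * (f r - f l))
        by (field; lra).
      nra.
    + rewrite straighten_out by lra. auto.
    + rewrite straighten_out by lra. auto.
  - rewrite straighten_out by lra. auto.
  - rewrite straighten_out by lra. auto.
Qed.

Lemma straighten_strict_mono f l r : l < r -> f l <> f r ->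
  strict_incr_on (straighten f l r) l r \/ strict_decr_on (straighten f l r) l r.
Proof.
  intros HLR Hf.
  destruct (Rlt_dec (f l) (f r)); [left|right]; intros x y Hx Hxy Hy;
    unfold straighten; rewrite !splice_in by lra.
  - assert (0 < (f r - f l) / (r - l)) by (apply Rdiv_lt_0_compat; lra). nra.
  - assert (0 < (f l - f r) / (r - l)) by (apply Rdiv_lt_0_compat; lra).
    replace ((f r - f l) / (r - l)) with (- ((f l - f r) / (r - l))) by (field; lra). nra.
Qed.

Lemma straighten_chord_param f l r : l < r -> f l <> f r ->
  (forall s, l <= s <= r -> l <= chord_param f l r s <= r) ->
  forall s, straighten f l r (chord_param f l r s) = f s.
Proof.
  intros HLR Hf Hrange s. destruct (Rle_dec l s); [destruct (Rle_dec s r)|].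
  - unfold straighten. rewrite splice_in by (apply Hrange; lra).
    unfold chord_param. rewrite splice_in by lra.
    field. split; [lra|]. intro E. apply Hf. lra.
  - rewrite chord_param_out, straighten_out by lra. auto.
  - rewrite chord_param_out, straighten_out by lra. auto.
Qed.

Definition zigzag (g : R -> R) (l a b r : R) : Prop :=
  l < a /\ a < b /\ b < r /\
  strict_incr_on g l a /\ strict_decr_on g a b /\ strict_incr_on g b r /\
  g l <= g b /\ g a <= g r.

Lemma zigzag_range g l a b r : zigzag g l a b r ->
  g l < g r /\ forall s, l <= s <= r -> g l <= g s <= g r.
Proof.
  intros (HLa & Hab & HbR & I1 & D2 & I3 & Hl & Hr).
  assert (g b < g r) by (apply I3; lra).
  split; [lra|]. intros s Hs.
  destruct (Rle_dec s a); [|destruct (Rle_dec s b)].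
  - pose proof (strict_incr_on_le g l a l s I1). pose proof (strict_incr_on_le g l a s a I1). lra.
  - pose proof (strict_decr_on_le g a b a s D2). pose proof (strict_decr_on_le g a b s b D2). lra.
  - pose proof (strict_incr_on_le g b r b s I3). pose proof (strict_incr_on_le g b r s r I3). lra.
Qed.

Lemma chord_param_zigzag f l a b r : 0 <= l -> r <= 1 -> zigzag f l a b r ->
  (forall s, l <= s <= r -> l <= chord_param f l r s <= r) /\
  strict_incr_on (chord_param f l r) 0 a /\ strict_decr_on (chord_param f l r) a b /\
  strict_incr_on (chord_param f l r) b 1.
Proof.
  intros HL HR Z. destruct (zigzag_range f l a b r Z) as [Hf Hbetween].
  destruct Z as (HLa & Hab & HbR & I1 & D2 & I3 & _).
  set (k := (r - l) / (f r - f l)).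
  assert (Hk : 0 < k) by (apply Rdiv_lt_0_compat; lra).
  assert (Inner : forall s, l <= s <= r -> chord_param f l r s = l + (f s - f l) * k)
    by (intros s Hs; unfold chord_param; rewrite splice_in by exact Hs; reflexivity).
  assert (Outer : forall s, s <= l \/ r <= s -> chord_param f l r s = s)
    by (intros; apply chord_param_out; lra).
  assert (Id : forall c d, strict_incr_on (fun s => s) c d) by (intros c d x y; lra).
  split; [|split; [|split]].
  - intros s Hs. rewrite Inner by exact Hs. specialize (Hbetween s Hs).
    split; [nra|]. assert ((f s - f l) * k <= (f r - f l) * k) by (apply Rmult_le_compat_r; lra).
    replace ((f r - f l) * k) with (r - l) in * by (unfold k; field; lra). lra.
  - apply (strict_incr_on_concat _ 0 l a).
    + apply (strict_incr_on_ext (fun s => s)); auto. intros s Hs; apply Outer; lra.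
    + apply (strict_incr_on_ext (fun s => l + (f s - f l) * k)); auto using strict_incr_on_affine.
      intros s Hs; apply Inner; lra.
  - apply (strict_decr_on_ext (fun s => l + (f s - f l) * k)); auto using strict_decr_on_affine.
    intros s Hs; apply Inner; lra.
  - apply (strict_incr_on_concat _ b r 1).
    + apply (strict_incr_on_ext (fun s => l + (f s - f l) * k)); auto using strict_incr_on_affine.
      intros s Hs; apply Inner; lra.
    + apply (strict_incr_on_ext (fun s => s)); auto. intros s Hs; apply Outer; lra.
Qed.

Lemma climbable_fold f l a b r : admissible f -> 0 <= l -> r <= 1 ->
  zigzag f l a b r \/ zigzag (fun s => - f s) l a b r ->
  climbable (straighten f l r) -> climbable f.
Proof.
  intros Af HL HR Z Cs.
  pose proof Af as (Cf & Mf & f0 & f1).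
  assert (Hf : f l <> f r /\ l < a /\ a < b /\ b < r).
  { destruct Z as [Z|Z]; destruct (zigzag_range _ _ _ _ _ Z) as [H _];
      destruct Z as (? & ? & ? & _); split; auto; lra. }
  destruct Hf as (Hf & HLa & Hab & HbR).
  assert (W : (forall s, l <= s <= r -> l <= chord_param f l r s <= r) /\
              strict_incr_on (chord_param f l r) 0 a /\ strict_decr_on (chord_param f l r) a b /\
              strict_incr_on (chord_param f l r) b 1).
  { destruct Z as [Z|Z]; [|rewrite <- chord_param_opp by exact Hf];
      apply (chord_param_zigzag _ l a b r); auto. }
  destruct W as (Hrange & I1 & D2 & I3).
  assert (Aw : admissible (chord_param f l r)).
  { split; [|split; [|split]].
    - apply cont01_splice; auto; [lra|ring|field; intro; apply Hf; lra|apply cont01_id|].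
      apply cont01_affine, Cf.
    - intros s Hs. destruct (Rle_dec l s); [destruct (Rle_dec s r)|].
      + specialize (Hrange s ltac:(lra)). unfold in01; lra.
      + rewrite chord_param_out by lra. exact Hs.
      + rewrite chord_param_out by lra. exact Hs.
    - apply chord_param_out; lra.
    - apply chord_param_out; lra. }
  apply (climbable_factor f (straighten f l r) (chord_param f l r)); auto.
  - apply (climbable_zshape _ a b); auto; lra.
  - intros s _. apply straighten_chord_param; auto; lra.
Qed.

Definition strict_mono_on (f : R -> R) (a b : R) : Prop :=
  strict_incr_on f a b \/ strict_decr_on f a b.

Definition monotone_partition (f : R -> R) (n : nat) (t : nat -> R) : Prop :=
  (0 < n)%nat /\ t 0%nat = 0 /\ t n = 1 /\ (forall i, (i < n)%nat -> t i < t (S i)) /\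
  (forall i, (i < n)%nat -> strict_mono_on f (t i) (t (S i))).

Lemma partition_le f n t : monotone_partition f n t ->
  forall i j, (i <= j)%nat -> (j <= n)%nat -> t i <= t j.
Proof.
  intros (_ & _ & _ & Ht & _) i j Hij. induction Hij as [|j Hij IH]; intros Hj; [lra|].
  specialize (IH ltac:(lia)). specialize (Ht j ltac:(lia)). lra.
Qed.

Lemma partition_lt f n t : monotone_partition f n t ->
  forall i j, (i < j)%nat -> (j <= n)%nat -> t i < t j.
Proof.
  intros P i j Hij Hj. pose proof (partition_le f n t P (S i) j Hij Hj).
  destruct P as (_ & _ & _ & Ht & _). specialize (Ht i ltac:(lia)). lra.
Qed.

Lemma partition_in01 f n t : monotone_partition f n t -> forall i, (i <= n)%nat -> 0 <= t i <= 1.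
Proof.
  intros P i Hi. pose proof (partition_le f n t P 0 i ltac:(lia) Hi).
  pose proof (partition_le f n t P i n Hi ltac:(lia)).
  destruct P as (_ & Ht0 & Ht1 & _). lra.
Qed.

Definition skip (t : nat -> R) (k i : nat) : R := if (i <=? k)%nat then t i else t (S i).

Lemma partition_merge f n t k : monotone_partition f (S n) t -> (S k <= n)%nat ->
  strict_mono_on f (t k) (t (S (S k))) -> monotone_partition f n (skip t k).
Proof.
  intros P Hk Hm. pose proof P as (_ & Ht0 & Ht1 & Ht & Hp). unfold skip.
  split; [lia|]. split; [simpl; auto|]. split.
  { destruct (Nat.leb_spec n k); [lia|]. auto. }
  split; intros i Hi; destruct (Nat.leb_spec i k), (Nat.leb_spec (S i) k); try lia;
    try (apply Ht; lia); try (apply Hp; lia); replace i with k by lia; auto.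
  apply (partition_lt f (S n) t P); lia.
Qed.

Lemma partition_replace f f' n t k : monotone_partition f n t -> (S (S (S k)) <= n)%nat ->
  (forall s, s <= t k \/ t (S (S (S k))) <= s -> f' s = f s) ->
  strict_mono_on f' (t k) (t (S (S (S k)))) -> monotone_partition f' n t.
Proof.
  intros P Hk Out Mid. pose proof P as (Hn & Ht0 & Ht1 & Ht & Hp).
  do 4 (split; [auto|]). intros i Hi.
  destruct (Compare_dec.le_lt_dec (S i) k) as [Hlo|Hlo];
    [|destruct (Compare_dec.le_lt_dec i (S (S k))) as [Hmid|Hhi]].
  - assert (t (S i) <= t k) by (apply (partition_le f n t P); lia).
    destruct (Hp i Hi) as [I|D]; [left|right].
    + apply (strict_incr_on_ext f); auto. intros s Hs. apply Out. lra.
    + apply (strict_decr_on_ext f); auto. intros s Hs. apply Out. lra.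
  - assert (t k <= t i) by (apply (partition_le f n t P); lia).
    assert (t (S i) <= t (S (S (S k)))) by (apply (partition_le f n t P); lia).
    destruct Mid as [I|D]; [left; eapply strict_incr_on_sub|right; eapply strict_decr_on_sub];
      eauto.
  - assert (t (S (S (S k))) <= t i) by (apply (partition_le f n t P); lia).
    destruct (Hp i Hi) as [I|D]; [left|right].
    + apply (strict_incr_on_ext f); auto. intros s Hs. apply Out. lra.
    + apply (strict_decr_on_ext f); auto. intros s Hs. apply Out. lra.
Qed.

Lemma straighten_partition f n t k : monotone_partition f (S (S n)) t ->
  (S (S (S k)) <= S (S n))%nat -> f (t k) <> f (t (S (S (S k)))) ->
  monotone_partition (straighten f (t k) (t (S (S (S k))))) n (skip (skip t k) k).
Proof.
  intros P Hk Hf.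
  set (f' := straighten f (t k) (t (S (S (S k))))).
  assert (Hlt : t k < t (S (S (S k)))) by (apply (partition_lt f _ t P); lia).
  assert (Mono : strict_mono_on f' (t k) (t (S (S (S k)))))
    by (apply straighten_strict_mono; auto).
  assert (P' : monotone_partition f' (S (S n)) t).
  { apply (partition_replace f f' _ t k); auto. intros s Hs. apply straighten_out; auto. }
  assert (Sub : forall c d, t k <= c -> d <= t (S (S (S k))) -> strict_mono_on f' c d).
  { intros c d Hc Hd. destruct Mono as [I|D];
      [left; eapply strict_incr_on_sub|right; eapply strict_decr_on_sub]; eauto. }
  apply partition_merge; [apply partition_merge; auto; [lia|]|lia|];
    unfold skip; rewrite ?(proj2 (Nat.leb_le k k)), ?(proj2 (Nat.leb_gt (S (S k)) k)) by lia;
    apply Sub; try lra; apply (partition_le f _ t P); lia.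
Qed.

Lemma strict_incr_decr_absurd f a b :
  a < b -> strict_incr_on f a b -> strict_decr_on f a b -> False.
Proof. intros Hab I D. specialize (I a b). specialize (D a b). lra. Qed.

Lemma first_piece_incr f n t : admissible f -> monotone_partition f n t ->
  strict_incr_on f (t 0%nat) (t 1%nat).
Proof.
  intros (_ & Mf & f0 & _) P. pose proof P as (Hn & T0 & _ & Ht & Hp).
  destruct (Hp 0%nat Hn) as [I|D]; auto. exfalso.
  assert (f (t 1%nat) < f (t 0%nat)) by (apply D; auto; apply Ht in Hn; lra).
  destruct (Mf (t 1%nat)); [apply (partition_in01 f n t P); lia|]. rewrite T0, f0 in *. lra.
Qed.

Lemma last_piece_incr f n t : admissible f -> monotone_partition f (S n) t ->
  strict_incr_on f (t n) (t (S n)).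
Proof.
  intros (_ & Mf & _ & f1) P. pose proof P as (_ & _ & T1 & Ht & Hp).
  destruct (Hp n ltac:(lia)) as [I|D]; auto. exfalso.
  assert (Hn : t n < t (S n)) by (apply Ht; lia).
  assert (f (t (S n)) < f (t n)) by (apply D; lra).
  destruct (Mf (t n)); [apply (partition_in01 f (S n) t P); lia|]. rewrite T1, f1 in *. lra.
Qed.

Lemma partition_alternating f n t k : monotone_partition f n t -> (S k < n)%nat ->
  ~ strict_mono_on f (t k) (t (S (S k))) ->
  (strict_incr_on f (t k) (t (S k)) /\ strict_decr_on f (t (S k)) (t (S (S k)))) \/
  (strict_decr_on f (t k) (t (S k)) /\ strict_incr_on f (t (S k)) (t (S (S k)))).
Proof.
  intros (_ & _ & _ & _ & Hp) Hk NoMerge.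
  destruct (Hp k ltac:(lia)) as [I0|D0], (Hp (S k) Hk) as [I1|D1]; auto; exfalso; apply NoMerge.
  - left. eapply strict_incr_on_concat; eauto.
  - right. eapply strict_decr_on_concat; eauto.
Qed.

Definition oscillation (f : R -> R) (t : nat -> R) (i : nat) : R :=
  Rabs (f (t (S i)) - f (t i)).

Lemma nat_argmin (g : nat -> R) m :
  exists j, (j <= m)%nat /\ forall i, (i <= m)%nat -> g j <= g i.
Proof.
  induction m as [|m [j [Hj P]]].
  - exists 0%nat. split; [lia|]. intros i Hi. replace i with 0%nat by lia. lra.
  - destruct (Rle_dec (g j) (g (S m))).
    + exists j. split; [lia|]. intros i Hi.
      destruct (Nat.eq_dec i (S m)); [subst; auto|apply P; lia].
    + exists (S m). split; [lia|]. intros i Hi.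
      destruct (Nat.eq_dec i (S m)); [subst; lra|]. specialize (P i ltac:(lia)). lra.
Qed.

Section LeastOscillation.

Variables (f : R -> R) (m : nat) (t : nat -> R) (j : nat).
Hypotheses (Af : admissible f) (P : monotone_partition f (S (S (S m))) t) (Hj : (j <= m)%nat).
Hypothesis Hmin : forall i, (i <= m)%nat -> oscillation f t (S j) <= oscillation f t (S i).

Lemma least_oscillation_valley :
  strict_incr_on f (t j) (t (S j)) -> strict_decr_on f (t (S j)) (t (S (S j))) ->
  strict_incr_on f (t (S (S j))) (t (S (S (S j)))) ->
  zigzag f (t j) (t (S j)) (t (S (S j))) (t (S (S (S j)))).
Proof.
  intros I0 D1 I2. pose proof Af as (_ & Mf & f0 & f1). pose proof P as (_ & T0 & T1 & Ht & _).
  assert (In01 : forall i, (i <= S (S (S m)))%nat -> in01 (f (t i)))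
    by (intros; apply Mf, (partition_in01 f _ t P); lia).
  assert (e0 : f (t j) < f (t (S j))) by (apply I0; [lra|apply Ht; lia|lra]).
  assert (e1 : f (t (S (S j))) < f (t (S j))) by (apply D1; [lra|apply Ht; lia|lra]).
  assert (e2 : f (t (S (S j))) < f (t (S (S (S j))))) by (apply I2; [lra|apply Ht; lia|lra]).
  do 6 (split; [first [assumption|apply Ht; lia]|]). split.
  - destruct j as [|j'].
    + rewrite T0, f0. apply In01. lia.
    + specialize (Hmin j' ltac:(lia)). unfold oscillation in Hmin. solve_abs.
  - destruct (Nat.eq_dec j m) as [->|Hjm].
    + rewrite T1, f1. apply In01. lia.
    + specialize (Hmin (S j) ltac:(lia)). unfold oscillation in Hmin. solve_abs.
Qed.

Lemma least_oscillation_peak :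
  strict_decr_on f (t j) (t (S j)) -> strict_incr_on f (t (S j)) (t (S (S j))) ->
  strict_decr_on f (t (S (S j))) (t (S (S (S j)))) ->
  zigzag (fun s => - f s) (t j) (t (S j)) (t (S (S j))) (t (S (S (S j)))).
Proof.
  intros D0 I1 D2. pose proof P as (_ & _ & _ & Ht & _).
  assert (e0 : f (t (S j)) < f (t j)) by (apply D0; [lra|apply Ht; lia|lra]).
  assert (e1 : f (t (S j)) < f (t (S (S j)))) by (apply I1; [lra|apply Ht; lia|lra]).
  assert (e2 : f (t (S (S (S j)))) < f (t (S (S j)))) by (apply D2; [lra|apply Ht; lia|lra]).
  do 3 (split; [apply Ht; lia|]).
  do 3 (split; [auto using strict_incr_on_opp, strict_decr_on_opp|]). split.
  - destruct j as [|j'].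
    + exfalso. apply (strict_incr_decr_absurd f (t 0%nat) (t 1%nat));
        [apply Ht; lia|apply (first_piece_incr f _ t Af P)|exact D0].
    + specialize (Hmin j' ltac:(lia)). unfold oscillation in Hmin. solve_abs.
  - destruct (Nat.eq_dec j m) as [->|Hjm].
    + exfalso. apply (strict_incr_decr_absurd f (t (S (S m))) (t (S (S (S m)))));
        [apply Ht; lia|apply (last_piece_incr f _ t Af P)|exact D2].
    + specialize (Hmin (S j) ltac:(lia)). unfold oscillation in Hmin. solve_abs.
Qed.

End LeastOscillation.

(* If no two adjacent pieces can be merged, the pieces alternate, and the interior
   piece of least oscillation is the middle of a zigzag of f or of -f. *)
Lemma partition_zigzag f m t : admissible f -> monotone_partition f (S (S (S m))) t ->
  (forall k, (S k < S (S (S m)))%nat -> ~ strict_mono_on f (t k) (t (S (S k)))) ->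
  exists j, (j <= m)%nat /\
    (zigzag f (t j) (t (S j)) (t (S (S j))) (t (S (S (S j)))) \/
     zigzag (fun s => - f s) (t j) (t (S j)) (t (S (S j))) (t (S (S (S j))))).
Proof.
  intros Af P NoMerge. pose proof P as (_ & _ & _ & Ht & _).
  destruct (nat_argmin (fun i => oscillation f t (S i)) m) as [j [Hj Hmin]].
  exists j. split; [exact Hj|].
  destruct (partition_alternating f _ t j P ltac:(lia) (NoMerge j ltac:(lia))) as [[I0 D1]|[D0 I1]];
    destruct (partition_alternating f _ t (S j) P ltac:(lia) (NoMerge (S j) ltac:(lia)))
      as [[I1' D2]|[D1' I2]].
  - exfalso. apply (strict_incr_decr_absurd f (t (S j)) (t (S (S j))) ltac:(apply Ht; lia) I1' D1).
  - left. apply least_oscillation_valley with m; auto.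
  - right. apply least_oscillation_peak with m; auto.
  - exfalso. apply (strict_incr_decr_absurd f (t (S j)) (t (S (S j))) ltac:(apply Ht; lia) I1 D1').
Qed.

Lemma climbable_of_partition n : forall f t,
  admissible f -> monotone_partition f n t -> climbable f.
Proof.
  induction n as [n IH] using Wf_nat.lt_wf_ind. intros f t Af P.
  pose proof P as (Hn & T0 & T1 & Ht & _).
  destruct (classic (exists k, (S k < n)%nat /\ strict_mono_on f (t k) (t (S (S k)))))
    as [[k [Hk Merge]]|NoMerge].
  { destruct n as [|n']; [lia|].
    apply (IH n' ltac:(lia) f (skip t k) Af), partition_merge; auto; lia. }
  destruct n as [|[|[|m]]]; [lia| | |].
  - apply climbable_incr; auto. rewrite <- T0, <- T1. apply (first_piece_incr f _ t Af P).
  - exfalso. apply NoMerge. exists 0%nat. split; [lia|]. left.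
    apply (strict_incr_on_concat _ _ (t 1%nat));
      [apply (first_piece_incr f _ t Af P)|apply (last_piece_incr f _ t Af P)].
  - destruct (partition_zigzag f m t Af P) as [j [Hj Z]].
    { intros k Hk Merge. apply NoMerge. eauto. }
    assert (Hf : f (t j) <> f (t (S (S (S j))))).
    { destruct Z as [Z|Z]; destruct (zigzag_range _ _ _ _ _ Z); lra. }
    apply (climbable_fold f (t j) (t (S j)) (t (S (S j))) (t (S (S (S j))))); auto;
      try (apply (partition_in01 f _ t P); lia).
    apply (IH (S m) ltac:(lia) _ (skip (skip t j) j)).
    + apply admissible_straighten; auto.
      * split; [apply (partition_in01 f _ t P); lia|apply (partition_lt f _ t P); lia].
      * apply (partition_in01 f _ t P); lia.
    + apply straighten_partition; auto; lia.
Qed.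

Theorem theorem3 (f1 f2 : R -> R) :
  cont01 f1 -> maps01 f1 -> cont01 f2 -> maps01 f2 ->
  f1 0 = 0 -> f2 0 = 0 -> f1 1 = 1 -> f2 1 = 1 ->
  classU f1 ->
  exists g1 g2 : R -> R,
    cont01 g1 /\ maps01 g1 /\ cont01 g2 /\ maps01 g2 /\
    g1 0 = 0 /\ g2 0 = 0 /\ g1 1 = 1 /\ g2 1 = 1 /\
    forall x, in01 x -> f1 (g1 x) = f2 (g2 x).
Proof.
  intros C1 M1 C2 M2 f10 f20 f11 f21 [[n [t P]] _].
  exact (climbable_of_partition n f1 t (conj C1 (conj M1 (conj f10 f11))) P
           f2 (conj C2 (conj M2 (conj f20 f21)))).
Qed.
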